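(* Let $G$ be a ground term whose set of free variables is exactly $\{x_1,\dots,x_n\}$, $\vec x=x_1,\dots,x_n$, and let $a$ be a fresh variable. Then $|\mathbf{bp}_{\vec x,a}(G)|=O(|G|)$, the implied constant depending only on the maximal arity of function symbols in $\mathcal F$.
   Context: Fix finite sets of function symbols $\mathcal F\subseteq\mathcal F'$, each symbol with an arity, $\mathcal F'$ containing a binary multiplication symbol written infix $t\cdot u$, together with partial maps $\partial_i:\mathcal F\to\mathcal F'$ ($i\ge1$) such that for every $f\in\mathcal F$ of arity $k$ and $1\le i\le k$, $\partial_i f$ is defined and has arity $k$. Terms of the calculus include: variables, numerals $\underline r$ ($r\in\mathbb R$), applications $f(t_1,\dots,t_k)$ of function symbols, pairs $\langle t,u\rangle$ (with $\langle t_1,\dots,t_n\rangle:=\langle t_1,\langle\dots\langle t_{n-1},t_n\rangle\dots\rangle\rangle$), sums $t+u$, and explicit substitutions $t[x\leftarrow u]$ (read ''let $x=u$ in $t$'', binding $x$ in $t$). A substitution context is $\alpha=\{\cdot\}[p_1\leftarrow t_1]\cdots[p_m\leftarrow t_m]$ ($m\ge0$); $t\alpha$ denotes $t[p_1\leftarrow t_1]\cdots[p_m\leftarrow t_m]$. $|t|$ (size) is the number of symbols in $t$. Ground terms: $F,G::=x\mid F[x\leftarrow G]\mid f(x_1,\dots,x_k)\mid\underline r\mid F+G$, with $x,x_i$ variables of type $\mathsf R$ and $f\in\mathcal F$. For ground terms, $F_0\oplus F_1:=F_1$ if $F_0=\underline 0$, $:=F_0$ if $F_1=\underline 0$ (and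 $F_0\neq\underline 0$), and $:=F_0+F_1$ otherwise. DEFINITION of $\mathbf{bp}$: for a sequence $\vec x=x_1,\dots,x_n$ of distinct variables containing the free variables of a ground term $G$ and a fresh variable $a$, the term $\mathbf{bp}_{\vec x,a}(G)$ (of type $\mathsf R\times\mathsf R^n$) always has the shape $\langle G_0,\langle G_1,\dots,G_n\rangle\alpha\rangle\beta$ with $\alpha,\beta$ substitution contexts and $a$ not free in $G_0$ nor in $\beta$, and is defined by induction on $G$: - $\mathbf{bp}_{\vec x,a}(x_i):=\langle x_i,\langle\underline0,\dots,a,\dots,\underline0\rangle\rangle$ ($a$ at position $i$); - $\mathbf{bp}_{\vec x,a}(\underline r):=\langle\underline r,\langle\underline0,\dots,\underline0\rangle\rangle$; - if $f$ has arity $k$ and $\vec y=y_1,\dots,y_k$ is a subsequence of $\vec x$: $\mathbf{bp}_{\vec x,a}(f(\vec y)):=\langle f(\vec y),\langle\dots\rangle\rangle$ where the $n$-tuple has $\partial_j f(\vec y)\cdot a$ at the position of $y_j$ in $\vec x$ ($1\le j\le k$) and $\underline 0$ elsewhere; - if $G=F'[z\leftarrow F'']$, let $b$ be a new variable, $\mathbf{bp}_{\vec x,z,a}(F')=\langle F'_0,\langle F'_1,\dots,F'_n,H\rangle\alpha'\rangle\beta'$ and $\mathbf{bp}_{\vec x,b}(F'')=\langle F''_0,\langle F''_1,\dots,F''_n\rangle\alpha''\rangle\beta''$ (with bound variables renamed apart); then $\mathbf{bp}_{\vec x,a}(G):=\langle F'_0,\langle F'_1,\dots,F'_n\rangle\alpha'\rangle\beta'[z\leftarrow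 F''_0]\beta''$ if $H=\underline0$, and otherwise $\mathbf{bp}_{\vec x,a}(G):=\langle F'_0,\langle F'_1\oplus F''_1,\dots,F'_n\oplus F''_n\rangle\alpha''[b\leftarrow H]\alpha'\rangle\beta'[z\leftarrow F''_0]\beta''$; - if $G=F'+F''$ with $\mathbf{bp}_{\vec x,a}(F')=\langle F'_0,\langle F'_1,\dots,F'_n\rangle\alpha'\rangle\beta'$ and $\mathbf{bp}_{\vec x,a}(F'')=\langle F''_0,\langle F''_1,\dots,F''_n\rangle\alpha''\rangle\beta''$, then $\mathbf{bp}_{\vec x,a}(G):=\langle F'_0+F''_0,\langle F'_1\oplus F''_1,\dots,F'_n\oplus F''_n\rangle\alpha'\alpha''\rangle\beta'\beta''$. *)

From Stdlib Require Import Reals List Arith Lia.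
Import ListNotations.
Open Scope nat_scope.

Definition var := nat.
Definition sym := nat.

(* A signature: finite sets F ⊆ F' (as lists), arities, the binary
   multiplication symbol of F', and the partial maps ∂_i : F -> F'. *)
Record signature := {
  symF : list sym;
  symF' : list sym;
  arity : sym -> nat;
  mul : sym;
  deriv : nat -> sym -> option sym
}.

Definition wf_sig (s : signature) : Prop :=
  incl (symF s) (symF' s) /\
  In (mul s) (symF' s) /\ arity s (mul s) = 2 /\
  (forall f, In f (symF s) -> forall i, 1 <= i <= arity s f ->
     exists g, deriv s i f = Some g /\ In g (symF' s) /\ arity s g = arity s f).

Definition max_arity (s : signature) : nat :=
  fold_right Nat.max 0 (map (arity s) (symF s)).

(* Terms of the calculus. [Let t x u] is the explicit substitution
   t[x <- u]; [Unit] is the empty tuple (used only when n = 0). *)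
Inductive term : Type :=
| Var : var -> term
| Num : R -> term
| App : sym -> list term -> term
| Pair : term -> term -> term
| Unit : term
| Add : term -> term -> term
| Let : term -> var -> term -> term.

Fixpoint tsize (t : term) : nat :=
  match t with
  | Var _ => 1
  | Num _ => 1
  | App _ ts =>
      S ((fix go (l : list term) : nat :=
            match l with [] => 0 | u :: l' => tsize u + go l' end) ts)
  | Pair t u => S (tsize t + tsize u)
  | Unit => 1
  | Add t u => S (tsize t + tsize u)
  | Let t x u => 2 + tsize t + tsize u
  end.

Inductive gterm : Type :=
| GVar : var -> gterm
| GLet : gterm -> var -> gterm -> gterm      (* GLet F z G = F[z <- G] *)
| GApp : sym -> list var -> gterm
| GNum : R -> gterm
| GAdd : gterm -> gterm -> gterm.

Fixpoint embed (G : gterm) : term :=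
  match G with
  | GVar x => Var x
  | GLet F z H => Let (embed F) z (embed H)
  | GApp f ys => App f (map Var ys)
  | GNum r => Num r
  | GAdd F H => Add (embed F) (embed H)
  end.

Definition gsize (G : gterm) : nat := tsize (embed G).

Fixpoint ground_wf (s : signature) (G : gterm) : Prop :=
  match G with
  | GVar _ => True
  | GLet F _ H => ground_wf s F /\ ground_wf s H
  | GApp f ys => In f (symF s) /\ length ys = arity s f
  | GNum _ => True
  | GAdd F H => ground_wf s F /\ ground_wf s H
  end.

Fixpoint free_vars (G : gterm) : list var :=
  match G with
  | GVar x => [x]
  | GLet F z H => remove Nat.eq_dec z (free_vars F) ++ free_vars H
  | GApp _ ys => ys
  | GNum _ => []
  | GAdd F H => free_vars F ++ free_vars H
  end.

Fixpoint all_vars (G : gterm) : list var :=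
  match G with
  | GVar x => [x]
  | GLet F z H => z :: all_vars F ++ all_vars H
  | GApp _ ys => ys
  | GNum _ => []
  | GAdd F H => all_vars F ++ all_vars H
  end.

Definition is_zero (t : term) : bool :=
  match t with
  | Num r => if Req_EM_T r 0%R then true else false
  | _ => false
  end.

Definition oplus (t u : term) : term :=
  if is_zero t then u else if is_zero u then t else Add t u.

(* substitution contexts {.}[p1<-t1]...[pm<-tm], as lists [(p1,t1);..] *)
Definition subctx := list (var * term).
Definition app_ctx (t : term) (al : subctx) : term :=
  fold_left (fun acc pu => Let acc (fst pu) (snd pu)) al t.

Fixpoint tuple (l : list term) : term :=
  match l with
  | [] => Unit
  | [t] => t
  | t :: l' => Pair t (tuple l')
  end.

(* result of bp: <G0, <G1..Gn> alpha> beta *)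
Record bpres := { r0 : term; rcomps : list term; ralpha : subctx; rbeta : subctx }.

Definition render (r : bpres) : term :=
  app_ctx (Pair (r0 r) (app_ctx (tuple (rcomps r)) (ralpha r))) (rbeta r).

(* position (0-based) of the LAST occurrence of y in xs (innermost binder) *)
Fixpoint lastpos_aux (y : var) (xs : list var) (i : nat) (acc : option nat)
  : option nat :=
  match xs with
  | [] => acc
  | x :: xs' => lastpos_aux y xs' (S i) (if Nat.eqb x y then Some i else acc)
  end.
Definition lastpos y xs := lastpos_aux y xs 0 None.

Definition opt_eqb (o : option nat) (i : nat) : bool :=
  match o with Some j => Nat.eqb i j | None => false end.

Definition dsym (s : signature) (j : nat) (f : sym) : sym :=
  match deriv s j f with Some g => g | None => f end.

Definition nth_t (i : nat) (l : list term) : term := nth i l (Num 0%R).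

(* bp_{xs,a}(G), threading a counter c of fresh variable names *)
Fixpoint bp_aux (s : signature) (xs : list var) (a : var) (G : gterm) (c : nat)
  : bpres * nat :=
  let n := length xs in
  match G with
  | GVar y =>
      ({| r0 := Var y;
          rcomps := map (fun i => if opt_eqb (lastpos y xs) i then Var a else Num 0%R)
                        (seq 0 n);
          ralpha := []; rbeta := [] |}, c)
  | GNum r =>
      ({| r0 := Num r; rcomps := repeat (Num 0%R) n; ralpha := []; rbeta := [] |}, c)
  | GApp f ys =>
      let arg := map Var ys in
      ({| r0 := App f arg;
          rcomps :=
            map (fun i =>
                   fold_left oplus
                     (map (fun j => App (mul s) [App (dsym s (S j) f) arg; Var a])
                          (filter (fun j => opt_eqb (lastpos (nth j ys 0) xs) i)
                                  (seq 0 (length ys))))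
                     (Num 0%R))
                (seq 0 n);
          ralpha := []; rbeta := [] |}, c)
  | GLet F1 z F2 =>
      let b := c in
      let (r1, c1) := bp_aux s (xs ++ [z]) a F1 (S c) in
      let (r2, c2) := bp_aux s xs b F2 c1 in
      let H := nth_t n (rcomps r1) in
      if is_zero H then
        ({| r0 := r0 r1; rcomps := firstn n (rcomps r1); ralpha := ralpha r1;
            rbeta := rbeta r1 ++ [(z, r0 r2)] ++ rbeta r2 |}, c2)
      else
        ({| r0 := r0 r1;
            rcomps := map (fun i => oplus (nth_t i (rcomps r1)) (nth_t i (rcomps r2)))
                          (seq 0 n);
            ralpha := ralpha r2 ++ [(b, H)] ++ ralpha r1;
            rbeta := rbeta r1 ++ [(z, r0 r2)] ++ rbeta r2 |}, c2)
  | GAdd F1 F2 =>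
      let (r1, c1) := bp_aux s xs a F1 c in
      let (r2, c2) := bp_aux s xs a F2 c1 in
      ({| r0 := Add (r0 r1) (r0 r2);
          rcomps := map (fun i => oplus (nth_t i (rcomps r1)) (nth_t i (rcomps r2)))
                        (seq 0 n);
          ralpha := ralpha r1 ++ ralpha r2;
          rbeta := rbeta r1 ++ rbeta r2 |}, c2)
  end.

Definition fresh_start (G : gterm) (xs : list var) (a : var) : nat :=
  S (fold_right Nat.max a (all_vars G ++ xs)).

Definition bp (s : signature) (xs : list var) (a : var) (G : gterm) : term :=
  render (fst (bp_aux s xs a G (fresh_start G xs a))).

(* Give every component of the gradient tuple the weight |t| + 1, except the
   numeral 0 which weighs nothing; then [t ⊕ u] never weighs more than [t] and
   [u] together, the extra 1 paying for the [+] node.  The potential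
   "size of G0 + weights of the components + sizes of the two substitution
   contexts" then grows by a constant at each let and each sum, and by
   O(k^2) <= O(K k) at an application f(y1..yk), because each argument y_j feeds
   exactly one component.  Rendering adds only the tuple skeleton, of size
   O(n), and n <= |G| since every x_i occurs free in G. *)

From Stdlib Require Import Reals List Arith Lia.
Import ListNotations.
Open Scope nat_scope.

Definition weight (t : term) : nat := if is_zero t then 0 else S (tsize t).

Definition sum_weight (l : list term) : nat := list_sum (map weight l).

Definition nth_weight_sum (n : nat) (l : list term) : nat :=
  list_sum (map (fun i => weight (nth_t i l)) (seq 0 n)).

Definition ctx_size (al : subctx) : nat :=
  list_sum (map (fun p => 2 + tsize (snd p)) al).

Definition bp_cost (r : bpres) : nat :=
  tsize (r0 r) + sum_weight (rcomps r) + ctx_size (ralpha r) + ctx_size (rbeta r).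

Lemma list_sum_map_le {A} (f g : A -> nat) (l : list A) :
  (forall x, In x l -> f x <= g x) -> list_sum (map f l) <= list_sum (map g l).
Proof.
  induction l as [|x l IH]; simpl; intros Hfg; [lia|].
  pose proof (Hfg x (or_introl eq_refl)).
  pose proof (IH (fun y Hy => Hfg y (or_intror Hy))). lia.
Qed.

Lemma list_sum_map_zero {A} (f : A -> nat) (l : list A) :
  (forall x, In x l -> f x = 0) -> list_sum (map f l) = 0.
Proof.
  induction l as [|x l IH]; simpl; intros Hf; [reflexivity|].
  rewrite (Hf x (or_introl eq_refl)), (IH (fun y Hy => Hf y (or_intror Hy))).
  reflexivity.
Qed.

Lemma list_sum_map_add {A} (f g : A -> nat) (l : list A) :
  list_sum (map (fun x => f x + g x) l) = list_sum (map f l) + list_sum (map g l).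
Proof. induction l; simpl; lia. Qed.

Lemma list_sum_map_const {A} (c : nat) (l : list A) :
  list_sum (map (fun _ => c) l) = length l * c.
Proof. induction l; simpl; lia. Qed.

Lemma list_sum_map_swap {A B} (g : A -> B -> nat) (l1 : list A) (l2 : list B) :
  list_sum (map (fun i => list_sum (map (g i) l2)) l1) =
  list_sum (map (fun j => list_sum (map (fun i => g i j) l1)) l2).
Proof.
  induction l2 as [|j l2 IH]; simpl.
  - now apply list_sum_map_zero.
  - now rewrite list_sum_map_add, IH.
Qed.

Lemma list_sum_indicator_le (o : option nat) (c k n : nat) :
  list_sum (map (fun i => if opt_eqb o i then c else 0) (seq k n)) <= c.
Proof.
  destruct o as [j|]; simpl; [|rewrite list_sum_map_zero; auto; lia].
  revert k; induction n as [|n IH]; intros k; simpl; [lia|].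
  destruct (Nat.eqb_spec k j) as [->|]; [|apply IH].
  rewrite list_sum_map_zero; [lia|].
  intros i Hi. apply in_seq in Hi.
  destruct (Nat.eqb_spec i j); [lia|reflexivity].
Qed.

Lemma is_zero_0 : is_zero (Num 0%R) = true.
Proof. unfold is_zero. now destruct (Req_EM_T 0 0). Qed.

Lemma weight_0 : weight (Num 0%R) = 0.
Proof. unfold weight. now rewrite is_zero_0. Qed.

Lemma tsize_le_weight (t : term) : tsize t <= S (weight t).
Proof.
  unfold weight. destruct (is_zero t) eqn:E; [|lia].
  destruct t; try discriminate. simpl. lia.
Qed.

Lemma weight_oplus (t u : term) : weight (oplus t u) <= weight t + weight u.
Proof.
  unfold oplus. destruct (is_zero t) eqn:Et; [lia|].
  destruct (is_zero u) eqn:Eu; [lia|].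
  unfold weight at 1; simpl. unfold weight. rewrite Et, Eu. lia.
Qed.

Lemma weight_fold_oplus (l : list term) (z : term) :
  weight (fold_left oplus l z) <= weight z + sum_weight l.
Proof.
  unfold sum_weight. revert z; induction l as [|x l IH]; intros z; simpl; [lia|].
  pose proof (IH (oplus z x)). pose proof (weight_oplus z x). lia.
Qed.

Lemma sum_weight_app (l1 l2 : list term) :
  sum_weight (l1 ++ l2) = sum_weight l1 + sum_weight l2.
Proof. unfold sum_weight. now rewrite map_app, list_sum_app. Qed.

Lemma sum_weight_firstn (n : nat) (l : list term) :
  sum_weight (firstn n l) <= sum_weight l.
Proof. rewrite <- (firstn_skipn n l) at 2. rewrite sum_weight_app. lia. Qed.

Lemma sum_weight_map_filter (P : nat -> bool) (h : nat -> term) (l : list nat) :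
  sum_weight (map h (filter P l)) =
  list_sum (map (fun j => if P j then weight (h j) else 0) l).
Proof.
  unfold sum_weight. induction l as [|j l IH]; simpl; [reflexivity|].
  destruct (P j); simpl; lia.
Qed.

Lemma nth_weight_sum_le (n : nat) (l : list term) : nth_weight_sum n l <= sum_weight l.
Proof.
  unfold nth_weight_sum, sum_weight.
  revert n; induction l as [|x l IH]; intros n.
  - rewrite list_sum_map_zero; [lia|]. intros [|i] _; apply weight_0.
  - destruct n as [|n]; simpl; [lia|].
    rewrite <- seq_shift, map_map. specialize (IH n). unfold nth_t in *. simpl. lia.
Qed.

Lemma nth_weight_sum_S (n : nat) (l : list term) :
  nth_weight_sum (S n) l = nth_weight_sum n l + weight (nth_t n l).
Proof.
  unfold nth_weight_sum. rewrite seq_S, map_app, list_sum_app. simpl. lia.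
Qed.

Lemma sum_weight_oplus_nth (n : nat) (l1 l2 : list term) :
  sum_weight (map (fun i => oplus (nth_t i l1) (nth_t i l2)) (seq 0 n))
  <= nth_weight_sum n l1 + nth_weight_sum n l2.
Proof.
  unfold sum_weight, nth_weight_sum. rewrite map_map, <- list_sum_map_add.
  apply list_sum_map_le. intros i _. apply weight_oplus.
Qed.

Lemma ctx_size_app (al bl : subctx) : ctx_size (al ++ bl) = ctx_size al + ctx_size bl.
Proof. unfold ctx_size. now rewrite map_app, list_sum_app. Qed.

Lemma ctx_size_cons (p : var * term) (al : subctx) :
  ctx_size (p :: al) = 2 + tsize (snd p) + ctx_size al.
Proof. reflexivity. Qed.

Lemma tsize_App_Var (f : sym) (ys : list var) :
  tsize (App f (map Var ys)) = S (length ys).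
Proof. induction ys; simpl in *; lia. Qed.

Lemma arity_le_max_arity (s : signature) (f : sym) :
  In f (symF s) -> arity s f <= max_arity s.
Proof.
  unfold max_arity. induction (symF s) as [|g l IH]; simpl; [tauto|].
  intros [->|Hf]; [lia|]. specialize (IH Hf). lia.
Qed.

Section Cost.

Variables (s : signature) (xs : list var) (a : var) (c : nat).

Lemma bp_cost_var (y : var) : bp_cost (fst (bp_aux s xs a (GVar y) c)) <= 3.
Proof.
  unfold bp_cost, sum_weight, ctx_size; simpl. rewrite map_map.
  enough (list_sum (map (fun i => weight (if opt_eqb (lastpos y xs) i then Var a
                                            else Num 0%R)) (seq 0 (length xs))) <= 2)
    by lia.
  eapply Nat.le_trans; [|apply (list_sum_indicator_le (lastpos y xs) 2 0)].
  apply list_sum_map_le. intros i _.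
  destruct (opt_eqb _ _); [reflexivity|now rewrite weight_0].
Qed.

Lemma bp_cost_num (r : R) : bp_cost (fst (bp_aux s xs a (GNum r) c)) = 1.
Proof.
  unfold bp_cost, sum_weight, ctx_size; simpl.
  rewrite list_sum_map_zero; [reflexivity|].
  intros t Ht. apply repeat_spec in Ht as ->. apply weight_0.
Qed.

(* Each term [∂_j f(ys) · a] has size k + 3 and, through [lastpos], lands in a
   single component: hence the k (k + 4) after swapping the two sums. *)
Lemma bp_cost_app (f : sym) (ys : list var) :
  bp_cost (fst (bp_aux s xs a (GApp f ys) c))
  <= length ys * (length ys + 4) + S (length ys).
Proof.
  set (k := length ys).
  unfold bp_cost, ctx_size; cbn [bp_aux fst r0 rcomps ralpha rbeta map list_sum fold_right].
  rewrite tsize_App_Var. fold k.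
  enough (sum_weight (map (fun i => fold_left oplus
            (map (fun j => App (mul s) [App (dsym s (S j) f) (map Var ys); Var a])
               (filter (fun j => opt_eqb (lastpos (nth j ys 0) xs) i) (seq 0 k)))
            (Num 0%R)) (seq 0 (length xs)))
          <= k * (k + 4)) by lia.
  unfold sum_weight at 1. rewrite map_map.
  transitivity (list_sum (map (fun i => list_sum (map
     (fun j => if opt_eqb (lastpos (nth j ys 0) xs) i then k + 4 else 0) (seq 0 k)))
     (seq 0 (length xs)))).
  - apply list_sum_map_le. intros i _.
    eapply Nat.le_trans; [apply weight_fold_oplus|].
    rewrite weight_0, sum_weight_map_filter. apply Nat.eq_le_incl. simpl.
    f_equal. apply map_ext. intros j. destruct (opt_eqb _ _); [|reflexivity].
    pose proof (tsize_App_Var (dsym s (S j) f) ys) as Hsize.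
    unfold weight, k. simpl in Hsize |- *. lia.
  - rewrite list_sum_map_swap.
    transitivity (list_sum (map (fun _ => k + 4) (seq 0 k))).
    + apply list_sum_map_le. intros j _. apply list_sum_indicator_le.
    + now rewrite list_sum_map_const, length_seq.
Qed.

End Cost.

Lemma bp_cost_le (K : nat) (s : signature) :
  max_arity s <= K ->
  forall G xs a c, ground_wf s G -> bp_cost (fst (bp_aux s xs a G c)) <= (K + 5) * gsize G.
Proof.
  intros HK G.
  induction G as [y|F1 IH1 z F2 IH2|f ys|r|F1 IH1 F2 IH2]; intros xs a c Hwf.
  - pose proof (bp_cost_var s xs a c y). change (gsize (GVar y)) with 1. lia.
  - destruct Hwf as [W1 W2]. cbn [bp_aux].
    specialize (IH1 (xs ++ [z]) a (S c) W1).
    destruct (bp_aux s (xs ++ [z]) a F1 (S c)) as [r1 c1].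
    specialize (IH2 xs c c1 W2).
    destruct (bp_aux s xs c F2 c1) as [r2 c2].
    simpl in IH1, IH2. change (gsize (GLet F1 z F2)) with (2 + gsize F1 + gsize F2).
    unfold bp_cost in *.
    pose proof (nth_weight_sum_le (S (length xs)) (rcomps r1)) as N1.
    pose proof (nth_weight_sum_le (length xs) (rcomps r2)) as N2.
    rewrite nth_weight_sum_S in N1.
    destruct (is_zero (nth_t (length xs) (rcomps r1))) eqn:EH;
      simpl; rewrite !ctx_size_app, !ctx_size_cons; simpl.
    + pose proof (sum_weight_firstn (length xs) (rcomps r1)). lia.
    + pose proof (sum_weight_oplus_nth (length xs) (rcomps r1) (rcomps r2)).
      assert (weight (nth_t (length xs) (rcomps r1)) =
              S (tsize (nth_t (length xs) (rcomps r1)))) by (unfold weight; now rewrite EH).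
      lia.
  - destruct Hwf as [Hf Hk].
    pose proof (arity_le_max_arity s f Hf).
    pose proof (bp_cost_app s xs a c f ys).
    unfold gsize; simpl embed; rewrite tsize_App_Var.
    assert (length ys <= K) by lia. nia.
  - rewrite bp_cost_num. change (gsize (GNum r)) with 1. lia.
  - destruct Hwf as [W1 W2]. cbn [bp_aux].
    specialize (IH1 xs a c W1).
    destruct (bp_aux s xs a F1 c) as [r1 c1].
    specialize (IH2 xs a c1 W2).
    destruct (bp_aux s xs a F2 c1) as [r2 c2].
    simpl in IH1, IH2. change (gsize (GAdd F1 F2)) with (1 + gsize F1 + gsize F2).
    unfold bp_cost in *. simpl. rewrite !ctx_size_app.
    pose proof (nth_weight_sum_le (length xs) (rcomps r1)).
    pose proof (nth_weight_sum_le (length xs) (rcomps r2)).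
    pose proof (sum_weight_oplus_nth (length xs) (rcomps r1) (rcomps r2)).
    lia.
Qed.

Lemma length_rcomps_bp_aux (s : signature) (xs : list var) (a : var) (G : gterm) (c : nat) :
  length (rcomps (fst (bp_aux s xs a G c))) <= length xs.
Proof.
  destruct G as [y|F1 z F2|f ys|r|F1 F2]; cbn [bp_aux].
  - simpl. now rewrite length_map, length_seq.
  - destruct (bp_aux s (xs ++ [z]) a F1 (S c)) as [r1 c1].
    destruct (bp_aux s xs c F2 c1) as [r2 c2].
    destruct (is_zero _); simpl.
    + rewrite length_firstn. lia.
    + now rewrite length_map, length_seq.
  - simpl. now rewrite length_map, length_seq.
  - simpl. now rewrite repeat_length.
  - destruct (bp_aux s xs a F1 c) as [r1 c1].
    destruct (bp_aux s xs a F2 c1) as [r2 c2]. simpl.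
    now rewrite length_map, length_seq.
Qed.

Lemma tsize_app_ctx (al : subctx) (t : term) :
  tsize (app_ctx t al) = tsize t + ctx_size al.
Proof.
  revert t; induction al as [|[p u] al IH]; intros t; [simpl; unfold ctx_size; simpl; lia|].
  unfold app_ctx in *. simpl. rewrite IH, ctx_size_cons. simpl. lia.
Qed.

Lemma tsize_tuple_le (l : list term) : tsize (tuple l) <= sum_weight l + 2 * length l + 1.
Proof.
  unfold sum_weight. induction l as [|x l IH]; [simpl; lia|].
  pose proof (tsize_le_weight x).
  destruct l as [|y l]; simpl in *; lia.
Qed.

Lemma tsize_render_le (r : bpres) :
  tsize (render r) <= bp_cost r + 2 * length (rcomps r) + 2.
Proof.
  unfold render, bp_cost. rewrite tsize_app_ctx. simpl. rewrite tsize_app_ctx.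
  pose proof (tsize_tuple_le (rcomps r)). lia.
Qed.

Lemma length_free_vars_le (G : gterm) : length (free_vars G) <= gsize G.
Proof.
  unfold gsize. induction G as [y|F1 IH1 z F2 IH2|f ys|r|F1 IH1 F2 IH2]; simpl.
  - lia.
  - rewrite length_app. pose proof (remove_length_le Nat.eq_dec (free_vars F1) z).
    unfold var in *. lia.
  - pose proof (tsize_App_Var f ys) as Hsize. simpl in Hsize. lia.
  - lia.
  - rewrite length_app. unfold var in *. lia.
Qed.

Lemma gsize_pos (G : gterm) : 1 <= gsize G.
Proof. destruct G; unfold gsize; simpl; lia. Qed.

Theorem lemma5p1 :
  forall K : nat, exists C : nat,
  forall s : signature, wf_sig s -> max_arity s <= K ->
  forall (G : gterm) (xs : list var) (a : var),
    ground_wf s G ->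
    NoDup xs ->
    (forall v, In v (free_vars G) <-> In v xs) ->
    ~ In a xs -> ~ In a (all_vars G) ->
    tsize (bp s xs a G) <= C * gsize G.
Proof.
  intros K. exists (K + 9). intros s _ HK G xs a Hwf Hnd Hfv _ _.
  set (r := fst (bp_aux s xs a G (fresh_start G xs a))).
  assert (Hcost : bp_cost r <= (K + 5) * gsize G) by now apply bp_cost_le.
  assert (Hlen : length (rcomps r) <= length xs) by apply length_rcomps_bp_aux.
  assert (Hn : length xs <= gsize G).
  { eapply Nat.le_trans; [|apply length_free_vars_le].
    apply NoDup_incl_length; [exact Hnd|]. intros v Hv. now apply Hfv. }
  pose proof (tsize_render_le r). pose proof (gsize_pos G).
  unfold bp. fold r. nia.
Qed.
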